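(* Let $\alpha>1$, let $X=\{x_j:j\in J\}\subset\mathbb{R}^2$ be finite with $n=|J|$, and suppose the $1$-centre $C$ of $X$ is equidistant from all points of $X$. Then $s_\alpha^*=C$ if and only if $C\in\mathrm{conv}(\{M_j(C):j\in J\})$.
   Context: $s_\alpha^*$ is the unique minimiser of $P_\alpha(s,X)=\sum_{j\in J}\|s-x_j\|^\alpha+\max_{j\in J}\|s-x_j\|^\alpha$. $C$ is the centre of the minimum enclosing circle of $X$. For a point $s$, $x_j(s)=s+\|s-x_j\|^{\alpha-2}(x_j-s)$ (so $\|x_j(s)-s\|=\|x_j-s\|^{\alpha-1}$), and $M_j(s)=\frac{1}{n+1}\big(x_j(s)+\sum_{i\in J}x_i(s)\big)$. *)

From HB Require Import structures.
From mathcomp Require Import all_boot all_order all_algebra.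
From mathcomp Require Import reals exp.
Set Implicit Arguments. Unset Strict Implicit. Unset Printing Implicit Defensive.
Import Order.TTheory GRing.Theory Num.Theory.
Local Open Scope ring_scope.

Definition pt (R : realType) := 'rV[R]_2.

Definition enorm (R : realType) (v : pt R) : R :=
  Num.sqrt (v ord0 ord0 ^+ 2 + v ord0 (Ordinal (isT : (1 < 2)%N)) ^+ 2).

Definition edist (R : realType) (p q : pt R) : R := enorm (p - q).

(* max_{j in J} of a nonnegative quantity (J = 'I_n nonempty in use). *)
Definition maxd (R : realType) (n : nat) (f : 'I_n -> R) : R :=
  \big[Num.max/0]_(j < n) f j.

Definition Palpha (R : realType) (n : nat) (alpha : R) (x : 'I_n -> pt R)
    (s : pt R) : R :=
  \sum_(j < n) powR (edist s (x j)) alpha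
  + maxd (fun j => powR (edist s (x j)) alpha).

Definition unique_minimiser (R : realType) (n : nat) (alpha : R)
    (x : 'I_n -> pt R) (s : pt R) : Prop :=
  (forall t, Palpha alpha x s <= Palpha alpha x t) /\
  (forall t, (forall u, Palpha alpha x t <= Palpha alpha x u) -> t = s).

Definition is_one_centre (R : realType) (n : nat) (x : 'I_n -> pt R)
    (C : pt R) : Prop :=
  forall s, maxd (fun j => edist C (x j)) <= maxd (fun j => edist s (x j)).

Definition xs (R : realType) (n : nat) (alpha : R) (x : 'I_n -> pt R)
    (s : pt R) (j : 'I_n) : pt R :=
  s + powR (edist s (x j)) (alpha - 2) *: (x j - s).

Definition Mj (R : realType) (n : nat) (alpha : R) (x : 'I_n -> pt R)
    (s : pt R) (j : 'I_n) : pt R :=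
  (n.+1%:R)^-1 *: (xs alpha x s j + \sum_(i < n) xs alpha x s i).

Definition in_conv (R : realType) (n : nat) (p : 'I_n -> pt R) (c : pt R) : Prop :=
  exists lam : 'I_n -> R,
    (forall j, 0 <= lam j) /\ \sum_(j < n) lam j = 1 /\
    c = \sum_(j < n) lam j *: p j.

(* P_alpha is the maximum of the convex functions
   psi_j = sum_i |. - x_i|^alpha + |. - x_j|^alpha, which, C being
   equidistant from X, all take the value P_alpha(C) at C; their gradients
   there are -alpha (n+1) (M_j(C) - C).  If C is a convex combination of the
   M_j(C), the same convex combination of the psi_j is a convex function below
   P_alpha with a critical point at C, so C minimises P_alpha.  Otherwise, by
   Gordan's alternative some direction d has positive scalar product with
   every M_j(C) - C, and moving from C along d strictly decreases every psi_j,
   hence P_alpha. *)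

From HB Require Import structures.
From mathcomp Require Import all_boot all_order all_algebra.
From mathcomp Require Import boolp functions reals topology normedtype derive realfun exp.
From mathcomp Require Import ring lra.
Import Order.TTheory GRing.Theory Num.Theory.
Import numFieldNormedType.Exports.
Set Implicit Arguments. Unset Strict Implicit. Unset Printing Implicit Defensive.
Local Open Scope classical_set_scope.
Local Open Scope ring_scope.

Section Plane.
Variable R : realType.
Implicit Types (u v w : pt R) (k : R).

Definition coordx v : R := v ord0 ord0.
Definition coordy v : R := v ord0 (Ordinal (isT : (1 < 2)%N)).

Definition dot u v : R := coordx u * coordx v + coordy u * coordy v.

Lemma pt_eq u v : coordx u = coordx v -> coordy u = coordy v -> u = v.
Proof.
move=> ex ey; apply/rowP => -[[|[|//]] i2].
  by rewrite (_ : Ordinal _ = ord0) //; apply: val_inj.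
by rewrite (_ : Ordinal _ = Ordinal (isT : (1 < 2)%N)) //; apply: val_inj.
Qed.

Lemma dotC u v : dot u v = dot v u.
Proof. by rewrite /dot mulrC [coordy u * _]mulrC. Qed.

Lemma dotDl u v w : dot (u + v) w = dot u w + dot v w.
Proof. by rewrite /dot /coordx /coordy !mxE; ring. Qed.

Lemma dotZl k u v : dot (k *: u) v = k * dot u v.
Proof. by rewrite /dot /coordx /coordy !mxE; ring. Qed.

Lemma dotDr u v w : dot u (v + w) = dot u v + dot u w.
Proof. by rewrite dotC dotDl !(dotC u). Qed.

Lemma dotZr k u v : dot u (k *: v) = k * dot u v.
Proof. by rewrite dotC dotZl dotC. Qed.

Lemma dot0l v : dot 0 v = 0.
Proof. by rewrite -(scale0r 0) dotZl mul0r. Qed.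

Lemma dot_suml n (f : 'I_n -> pt R) v :
  dot (\sum_(i < n) f i) v = \sum_(i < n) dot (f i) v.
Proof. by rewrite /dot /coordx /coordy !summxE !mulr_suml -big_split. Qed.

Lemma enormE v : enorm v = Num.sqrt (coordx v ^+ 2 + coordy v ^+ 2).
Proof. by []. Qed.

Lemma enorm_ge0 v : 0 <= enorm v.
Proof. exact: sqrtr_ge0. Qed.

Lemma dotvv v : dot v v = enorm v ^+ 2.
Proof. by rewrite enormE sqr_sqrtr ?addr_ge0 ?sqr_ge0 // /dot !expr2. Qed.

Lemma enorm_eq0 v : (enorm v == 0) = (v == 0).
Proof.
rewrite enormE sqrtr_eq0 le_eqVlt ltNge addr_ge0 ?sqr_ge0 // orbF.
rewrite paddr_eq0 ?sqr_ge0 // !sqrf_eq0; apply/andP/eqP => [[/eqP ex /eqP ey]|->].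
  by apply: pt_eq; rewrite ?ex ?ey /coordx /coordy mxE.
by rewrite /coordx /coordy !mxE.
Qed.

Lemma dotvv_gt0 v : v != 0 -> 0 < dot v v.
Proof.
by move=> v0; rewrite dotvv exprn_gt0 // lt_def enorm_eq0 v0 enorm_ge0.
Qed.

Lemma dot_le_enorm u v : dot u v <= enorm u * enorm v.
Proof.
rewrite !enormE -sqrtrM ?addr_ge0 ?sqr_ge0 //.
apply: le_trans (ler_norm _) _.
rewrite -sqrtr_sqr ler_sqrt ?mulr_ge0 ?addr_ge0 ?sqr_ge0 // /dot.
have := sqr_ge0 (coordx u * coordy v - coordy u * coordx v); nra.
Qed.

Lemma edist_eq0 (p q : pt R) : (edist p q == 0) = (p == q).
Proof. by rewrite /edist enorm_eq0 subr_eq0. Qed.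


Lemma powR_tangent (a b al : R) : 0 <= a -> 0 <= b -> 1 < al ->
  al * a `^ (al - 1) * b <= b `^ al + (al - 1) * a `^ al.
Proof.
move=> a0 b0 al1; set q := al / (al - 1).
have q0 : 0 < q by rewrite divr_gt0 //; lra.
have pq : al^-1 + q^-1 = 1 by rewrite invf_div; field; lra.
have := conjugate_powR b0 (powR_ge0 a (al - 1)) (lt_trans ltr01 al1) q0 pq.
rewrite -powRrM (_ : (al - 1) * q = al); last by rewrite /q; field; lra.
move/(ler_wpM2l (ltW (lt_trans ltr01 al1))).
have -> : al * (b `^ al / al + a `^ al / q) = b `^ al + (al - 1) * a `^ al.
  by rewrite /q; field; lra.
by rewrite mulrAC mulrA.
Qed.

Lemma edist_powR_subgradient (al : R) (s t p : pt R) : 1 < al ->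
  edist s p `^ al - al * dot (edist s p `^ (al - 2) *: (p - s)) (t - s)
    <= edist t p `^ al.
Proof.
move=> al1; have [->|s_neq_p] := eqVneq s p.
  have -> : edist p p = 0 by apply/eqP; rewrite edist_eq0.
  by rewrite subrr scaler0 dot0l mulr0 subr0 powR0 ?powR_ge0 //; lra.
set a := edist s p.
have a_neq0 : a != 0 by rewrite edist_eq0.
have a_gt0 : 0 < a by rewrite lt_def a_neq0 enorm_ge0.
have e1 : a `^ (al - 2) * a = a `^ (al - 1).
  rewrite -[RHS]mulr_powRB1 ?enorm_ge0 ?subr_gt0 // mulrC.
  by rewrite (_ : al - 1 - 1 = al - 2) //; ring.
have e2 : a `^ (al - 2) * a ^+ 2 = a `^ al.
  rewrite expr2 mulrA e1 mulrC mulr_powRB1 ?enorm_ge0 //; lra.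
have edot : dot (p - s) (t - s) = a ^+ 2 - dot (s - p) (t - p).
  by rewrite -dotvv /dot /coordx /coordy !mxE; ring.
have cs := dot_le_enorm (s - p) (t - p).
have := powR_tangent (enorm_ge0 (s - p)) (enorm_ge0 (t - p)) al1.
rewrite dotZl edot -/a -/(edist t p).
have := ler_wpM2l (mulr_ge0 (ltW (lt_trans ltr01 al1)) (powR_ge0 a (al - 2))) cs.
rewrite -/a -/(edist t p) => cs_scaled tangent.
have e3 : al * a `^ (al - 2) * (a * edist t p) = al * a `^ (al - 1) * edist t p.
  by rewrite -e1; ring.
rewrite e3 in cs_scaled.
have e4 : al * (a `^ (al - 2) * (a ^+ 2 - dot (s - p) (t - p)))
  = al * a `^ al - al * a `^ (al - 2) * dot (s - p) (t - p).
  by rewrite -e2; ring.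
rewrite e4; lra.
Qed.

Section Maxd.
Variables (n : nat) (f : 'I_n -> R).

Lemma le_maxd j : f j <= maxd f.
Proof. by rewrite /maxd (bigD1 j) //= le_max lexx. Qed.

Lemma maxd_le c : 0 <= c -> (forall j, f j <= c) -> maxd f <= c.
Proof.
move=> c0 fc; rewrite /maxd; apply: (big_ind (fun y => y <= c)) => // y z yc zc.
by rewrite ge_max yc zc.
Qed.

Lemma maxd_lt c : 0 < c -> (forall j, f j < c) -> maxd f < c.
Proof.
move=> c0 fc; rewrite /maxd; apply: (big_ind (fun y => y < c)) => // y z yc zc.
by rewrite gt_max yc zc.
Qed.

Lemma convex_comb_le_maxd (lam : 'I_n -> R) :
  (forall j, 0 <= lam j) -> \sum_(j < n) lam j = 1 ->
  \sum_(j < n) lam j * f j <= maxd f.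
Proof.
move=> lam0 lam1; apply: le_trans (_ : \sum_(j < n) lam j * maxd f <= _).
  by apply: ler_sum => j _; rewrite ler_wpM2l ?le_maxd.
by rewrite -mulr_suml lam1 mul1r.
Qed.

Lemma exists_gt : exists t, forall j, f j < t.
Proof. by exists (maxd f + 1) => j; apply: le_lt_trans (le_maxd j) _; rewrite ltrDl. Qed.

Lemma exists_between c : (forall j, f j < c) ->
  exists t, (forall j, f j < t) /\ t < c.
Proof.
move=> fc; pose m := \big[Num.max/(c - 1)]_(j < n) f j.
have mc : m < c.
  apply: (big_ind (fun y => y < c)) => [|y z yc zc|j _]; rewrite ?gt_max ?yc ?zc ?fc //.
  by rewrite ltrBlDr ltrDl.
exists ((m + c) / 2); split; last by lra.
move=> j; suff : f j <= m by lra.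
by rewrite /m (bigD1 j) //= le_max lexx.
Qed.

End Maxd.

Lemma forall_lift0 n (P : 'I_n.+1 -> Prop) :
  P ord0 -> (forall i, P (lift ord0 i)) -> forall j, P j.
Proof. by move=> P0 Plift j; case: (unliftP ord0 j) => [i ->|->]. Qed.

Lemma in_conv0_lift n (w : 'I_n.+1 -> pt R) (lam : 'I_n -> R) c :
  (forall i, 0 <= lam i) -> 0 <= c -> c + \sum_(i < n) lam i = 1 ->
  c *: w ord0 + \sum_(i < n) lam i *: w (lift ord0 i) = 0 -> in_conv w 0.
Proof.
move=> lam0 c0 lam1 lamw.
exists (fun j => if unlift ord0 j is Some i then lam i else c).
split; first by apply: forall_lift0 => [|i]; rewrite ?unlift_none ?liftK.
split; rewrite big_ord_recl unlift_none; under eq_bigr do rewrite liftK; by [].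
Qed.

Section GordanStep.
Variables (n : nat) (w : 'I_n.+1 -> pt R) (d : pt R).
Hypothesis hd : forall i, 0 < dot (w (lift ord0 i)) d.

Lemma gordan_step_orth : dot (w ord0) d = 0 ->
  in_conv w 0 \/ exists d', forall j, 0 < dot (w j) d'.
Proof.
move=> w0d; have [w00|w0_neq0] := eqVneq (w ord0) 0.
  left; apply: (@in_conv0_lift _ _ (fun=> 0) 1) => //; first by rewrite big1 ?addr0.
  by rewrite big1 ?w00 ?scaler0 ?addr0 // => i _; rewrite scale0r.
right; have [t ht] := exists_gt (fun i => - dot (w (lift ord0 i)) (w ord0) / dot (w (lift ord0 i)) d).
exists (t *: d + w ord0); apply: forall_lift0 => [|i].
  by rewrite dotDr dotZr w0d mulr0 add0r dotvv_gt0.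
by have := ht i; rewrite ltr_pdivrMr ?hd // dotDr dotZr; lra.
Qed.

(* Projecting the remaining points along [w ord0] onto the line [dot _ d = 0]
   reduces to one point fewer. *)
Lemma gordan_step_neg :
  (forall u : 'I_n -> pt R, in_conv u 0 \/ exists d', forall i, 0 < dot (u i) d') ->
  dot (w ord0) d < 0 -> in_conv w 0 \/ exists d', forall j, 0 < dot (w j) d'.
Proof.
move=> IH w0d; set b := - dot (w ord0) d.
have b_gt0 : 0 < b by rewrite oppr_gt0.
have [[mu [mu0 [mu1 muu]]]|[d' hd']] :=
  IH (fun i => dot (w (lift ord0 i)) d *: w ord0 + b *: w (lift ord0 i)).
  left; set A := \sum_(i < n) mu i * dot (w (lift ord0 i)) d.
  have A0 : 0 <= A by apply: sumr_ge0 => i _; rewrite mulr_ge0 // ltW.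
  have Ab : 0 < A + b by lra.
  have E : \sum_(i < n) mu i *: (dot (w (lift ord0 i)) d *: w ord0 + b *: w (lift ord0 i))
      = A *: w ord0 + b *: \sum_(i < n) mu i *: w (lift ord0 i).
    rewrite /A scaler_suml scaler_sumr -big_split; apply: eq_bigr => i _.
    by rewrite scalerDr !scalerA mulrC [b * _]mulrC.
  apply: (@in_conv0_lift _ _ (fun i => b * mu i / (A + b)) (A / (A + b))).
  - by move=> i; rewrite divr_ge0 ?mulr_ge0 // ltW.
  - by rewrite divr_ge0 // ltW.
  - by rewrite -mulr_suml -mulr_sumr mu1; field; lra.
  - have -> : A / (A + b) *: w ord0 + \sum_(i < n) (b * mu i / (A + b)) *: w (lift ord0 i)
        = (A + b)^-1 *: (A *: w ord0 + b *: \sum_(i < n) mu i *: w (lift ord0 i)).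
      rewrite scalerDr !scalerA scaler_sumr mulrC; congr (_ + _).
      by apply: eq_bigr => i _; rewrite !scalerA mulrC mulrA.
    by rewrite -E -muu scaler0.
have [t [ht htd']] : exists t,
    (forall i, - (b * dot (w (lift ord0 i)) d') / dot (w (lift ord0 i)) d < t)
    /\ t < dot (w ord0) d'.
  apply: exists_between => i; have := hd' i.
  by rewrite ltr_pdivrMr ?hd // dotDl !dotZl; nra.
right; exists (b *: d' + t *: d); apply: forall_lift0 => [|i].
  have bt : t * dot (w ord0) d = - (b * t) by rewrite /b mulNr opprK mulrC.
  have : 0 < dot (w ord0) d' - t by rewrite subr_gt0.
  by move/(mulr_gt0 b_gt0); rewrite dotDr !dotZr bt mulrBr; lra.
by have := ht i; rewrite ltr_pdivrMr ?hd // dotDr !dotZr; lra.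
Qed.

End GordanStep.

Lemma gordan n (w : 'I_n -> pt R) :
  in_conv w 0 \/ exists d, forall j, 0 < dot (w j) d.
Proof.
elim: n w => [|n IH] w; first by right; exists 0 => -[].
have [[lam [lam0 [lam1 lamw]]]|[d hd]] := IH (fun i => w (lift ord0 i)).
  left; apply: (in_conv0_lift lam0 (lexx 0)); first by rewrite add0r.
  by rewrite scale0r add0r -lamw.
have [w0d|w0d] := ltP 0 (dot (w ord0) d); first by right; exists d; apply: forall_lift0.
have [w0d0|w0d_neq0] := eqVneq (dot (w ord0) d) 0; first exact: gordan_step_orth.
by apply: gordan_step_neg => //; rewrite lt_neqAle w0d_neq0.
Qed.

Lemma is_derive_edist_powR (al : R) (s d p : pt R) : s != p ->
  is_derive (0 : R) 1 (fun h : R => edist (s + h *: d) p `^ al)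
    (- al * dot (edist s p `^ (al - 2) *: (p - s)) d).
Proof.
move=> sp; set a := edist s p.
have a_gt0 : 0 < a by rewrite lt_def edist_eq0 sp enorm_ge0.
pose Q h : R :=
  (coordx (s - p) + h * coordx d) ^+ 2 + (coordy (s - p) + h * coordy d) ^+ 2.
have distE : (fun h : R => edist (s + h *: d) p `^ al) = (@powR R)^~ (al / 2) \o Q.
  apply/funext => h /=; rewrite /edist enormE -powR12_sqrt ?addr_ge0 ?sqr_ge0 //.
  rewrite -powRrM mulrC /Q /coordx /coordy !mxE.
  by rewrite !(addrAC _ (h * _)).
have Q0 : Q 0 = a ^+ 2.
  by rewrite /Q !mul0r !addr0 /a /edist enormE sqr_sqrtr ?addr_ge0 ?sqr_ge0.
have dQ : is_derive (0 : R) 1 Q (2 * dot (s - p) d).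
  by apply: is_derive_eq; rewrite /dot /GRing.scale /=; ring.
have Q_gt0 : 0 < Q 0 by rewrite Q0 exprn_gt0.
rewrite distE; apply: is_derive_eq (is_derive1_comp (is_derive1_powR _ Q_gt0) dQ) _.
rewrite Q0 -powR_mulrn ?enorm_ge0 // -powRrM (_ : 2%:R * (al / 2 - 1) = al - 2); last by field.
rewrite dotZl (_ : dot (p - s) d = - dot (s - p) d); first by field.
by rewrite -opprB -scaleN1r dotZl mulN1r.
Qed.

Lemma is_derive_lt0_near_right (psi : R -> R) (L : R) :
  is_derive (0 : R) 1 psi L -> L < 0 -> \forall h \near 0^'+, psi h < psi 0.
Proof.
case=> dpsi dval L0.
rewrite /derivable in dpsi; rewrite /derive in dval; rewrite dval in dpsi.
have := cvgr_lt L dpsi 0 L0.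
rewrite !near_withinE => quot_lt; have {}quot_lt := quot_lt (dnbhs_filter _).
apply: filterS quot_lt => h /= quot_lt h_gt0.
move: (quot_lt (lt0r_neq0 h_gt0)); rewrite /= scaler1 addr0 /GRing.scale /=.
by rewrite pmulr_rlt0 ?invr_gt0 // subr_lt0.
Qed.

Section Palpha.
Variables (n : nat) (al : R) (x : 'I_n -> pt R).

(* [- al *: Mvec s j] is the gradient at [s] of
   [sum_i |. - x_i|^al + |. - x_j|^al]. *)
Definition Mvec (s : pt R) (j : 'I_n) : pt R :=
  xs al x s j - s + \sum_(i < n) (xs al x s i - s).

Lemma xs_subr s j : xs al x s j - s = edist s (x j) `^ (al - 2) *: (x j - s).
Proof. by rewrite /xs addrC addKr. Qed.

Lemma Mvec_Mj s j : Mvec s j = n.+1%:R *: (Mj al x s j - s).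
Proof.
rewrite /Mvec /Mj scalerBr scalerA mulfV ?pnatr_eq0 // scale1r sumrB sumr_const.
by rewrite card_ord scaler_nat mulrS opprD addrACA.
Qed.

Lemma in_conv_Mj s : in_conv (Mj al x s) s <-> in_conv (Mvec s) 0.
Proof.
have combE (lam : 'I_n -> R) : \sum_(j < n) lam j = 1 ->
    \sum_(j < n) lam j *: Mvec s j
    = n.+1%:R *: (\sum_(j < n) lam j *: Mj al x s j - s).
  move=> lam1; under eq_bigr do rewrite Mvec_Mj scalerA mulrC -scalerA scalerBr.
  by rewrite -scaler_sumr sumrB -scaler_suml lam1 scale1r.
split=> -[lam [lam0 [lam1 lamE]]]; exists lam; split=> //; split=> //.
  by rewrite (combE lam lam1) -lamE subrr scaler0.
move: lamE; rewrite (combE lam lam1).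
by move/esym/eqP; rewrite scaler_eq0 pnatr_eq0 /= subr_eq0 => /eqP ->.
Qed.

Lemma Mvec_eq0 s : (forall j, x j = s) -> forall j, Mvec s j = 0.
Proof.
move=> xs_eq j; rewrite /Mvec big1 => [|i _]; rewrite xs_subr xs_eq subrr scaler0 //.
by rewrite addr0.
Qed.

Lemma Palpha_descent (s d : pt R) : (0 < n)%N -> 1 < al ->
  (forall i, s != x i) -> (forall j, 0 < dot (Mvec s j) d) ->
  exists t, Palpha al x t < Palpha al x s.
Proof.
move=> n_gt0 al1 sx hd.
pose G i h := edist (s + h *: d) (x i) `^ al.
have G0 i : G i 0 = edist s (x i) `^ al by rewrite /G scale0r addr0.
have dpsi j : is_derive (0 : R) 1 (\sum_(i < n) G i + G j) (- al * dot (Mvec s j) d).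
  have dG i := is_derive_edist_powR al d (sx i).
  apply: is_derive_eq (is_deriveD (is_derive_sum dG) (dG j)) _.
  rewrite -mulr_sumr -mulrDr -dot_suml -dotDl addrC /Mvec -xs_subr.
  by under eq_bigr do rewrite -xs_subr.
have : \forall h \near 0^'+, forall j,
    (\sum_(i < n) G i + G j) h < (\sum_(i < n) G i + G j) 0.
  apply: filter_forall => j; apply: is_derive_lt0_near_right (dpsi j) _.
  by rewrite mulNr oppr_lt0 mulr_gt0 ?hd //; lra.
move=> /filter_ex [h psi_lt]; exists (s + h *: d).
set c := Palpha al x s - \sum_(i < n) G i h.
have Gc j : G j h < c.
  have := psi_lt j; rewrite !fctE !fct_sumE G0; under [in X in _ < X]eq_bigr do rewrite G0.
  by have := le_maxd (fun i => edist s (x i) `^ al) j; rewrite /c /Palpha; lra.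
have c_gt0 : 0 < c by apply: le_lt_trans (Gc (Ordinal n_gt0)); apply: powR_ge0.
by have := maxd_lt c_gt0 Gc; rewrite /c /Palpha; lra.
Qed.

Lemma Palpha_ge_equidistant (s t : pt R) (r : R) : 1 < al ->
  (forall j, edist s (x j) = r) -> in_conv (Mvec s) 0 ->
  Palpha al x s <= Palpha al x t.
Proof.
move=> al1 hr [lam [lam0 [lam1 lamM]]].
pose D j := dot (xs al x s j - s) (t - s).
have sub j : r `^ al - al * D j <= edist t (x j) `^ al.
  by rewrite /D xs_subr -(hr j); apply: edist_powR_subgradient.
have D0 : \sum_(j < n) D j + \sum_(j < n) lam j * D j = 0.
  have <- : \sum_(j < n) dot (lam j *: Mvec s j) (t - s)
      = \sum_(j < n) D j + \sum_(j < n) lam j * D j.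
    under eq_bigr do rewrite dotZl /Mvec dotDl dot_suml mulrDr.
    by rewrite big_split /= -mulr_suml lam1 mul1r addrC.
  by rewrite -dot_suml -lamM dot0l.
have sum_sub : n%:R * r `^ al - al * \sum_(j < n) D j
    <= \sum_(j < n) edist t (x j) `^ al.
  rewrite (_ : _ - _ = \sum_(j < n) (r `^ al - al * D j)); last first.
    by rewrite sumrB sumr_const card_ord mulr_natl mulr_sumr.
  by apply: ler_sum => j _; apply: sub.
have comb_sub : r `^ al - al * \sum_(j < n) lam j * D j
    <= maxd (fun j => edist t (x j) `^ al).
  apply: le_trans (convex_comb_le_maxd _ lam0 lam1).
  rewrite (_ : _ - _ = \sum_(j < n) lam j * (r `^ al - al * D j)); last first.
    under [RHS]eq_bigr do rewrite mulrBr mulrCA.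
    by rewrite sumrB -mulr_suml lam1 mul1r -mulr_sumr.
  by apply: ler_sum => j _; rewrite ler_wpM2l ?sub.
have Ps : Palpha al x s <= n%:R * r `^ al + r `^ al.
  rewrite /Palpha (eq_bigr (fun=> r `^ al)) => [|j _]; last by rewrite hr.
  rewrite sumr_const card_ord mulr_natl lerD2l.
  by apply: maxd_le => [|j]; rewrite ?powR_ge0 ?hr.
have := congr1 (fun y => al * y) D0; rewrite /= mulr0 mulrDr.
rewrite /Palpha in Ps *; lra.
Qed.


End Palpha.

End Plane.

Theorem proposition5 (R : realType) (alpha : R) (n : nat)
    (x : 'I_n -> pt R) (C s_star : pt R) :
  1 < alpha ->
  (0 < n)%N ->
  injective x ->
  is_one_centre x C ->
  (exists r : R, forall j, edist C (x j) = r) ->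
  unique_minimiser alpha x s_star ->
  (s_star = C <-> in_conv (Mj alpha x C) C).
Proof.
move=> al1 n_gt0 _ _ [r hr] [s_min s_uniq]; rewrite in_conv_Mj.
split=> [s_starC | Mconv]; last first.
  by apply/esym/s_uniq => t; apply: Palpha_ge_equidistant hr Mconv.
have [//|[d hd]] := gordan (Mvec alpha x C).
have C_notin i : C != x i.
  apply/negP => /eqP Cxi.
  have xC j : x j = C by apply/eqP; rewrite eq_sym -edist_eq0 hr -(hr i) Cxi edist_eq0.
  by have := hd (Ordinal n_gt0); rewrite Mvec_eq0 // dot0l ltxx.
have [t Pt] := Palpha_descent n_gt0 al1 C_notin hd.
by have := s_min t; rewrite s_starC leNgt Pt.
Qed.
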